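(* Let $f_0$ be an arithmetic function and let $m\ge1$. For every $n\ge1$, \[f_m(n)=\sum_{i=1}^n m^{i-1}c_1(n,i).\]
   Context: An arithmetic function is a function $f_0:\{1,2,\ldots\}\to\mathbb{C}$. For $m\ge 1$, $f_m$ is the invert transform of $f_{m-1}$, i.e. $f_m(n)=f_{m-1}(n)+\sum_{i=1}^{n-1}f_{m-1}(i)f_m(n-i)$ for $n\ge1$. The numbers $c_1(n,k)$, $0\le k\le n$, are defined by $c_1(0,0)=1$, $c_1(n,0)=0$ for $n\ge1$, and $c_1(n,k)=\sum_{i=1}^{n-k+1}f_{0}(i)\,c_1(n-i,k-1)$ for $1\le k\le n$. *)

From mathcomp Require Import all_boot all_order all_algebra.
From mathcomp Require Import complex.
Set Implicit Arguments. Unset Strict Implicit. Unset Printing Implicit Defensive.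
Import GRing.Theory.
Local Open Scope ring_scope.

(* An arithmetic function {1,2,...} -> C is represented as g : nat -> C;
   the value g 0 is irrelevant and never used. *)

Section Invert.
Variable C : comNzRingType.

(* Given g = f_{m-1}, build the values of its invert transform h = f_m on
   1..n as the sequence [h 1; ...; h n], via
   h(n) = g(n) + sum_{i=1}^{n-1} g(i) h(n-i). *)
Fixpoint invert_seq (g : nat -> C) (n : nat) : seq C :=
  match n with
  | 0 => [::]
  | n'.+1 =>
      let s := invert_seq g n' in
      (* nth 0 s (k-1) = h k for 1 <= k <= n' *)
      rcons s (g n + \sum_(1 <= i < n) g i * nth 0 s (n - i).-1)
  end.

Definition invert (g : nat -> C) (n : nat) : C := nth 0 (invert_seq g n) n.-1.

Definition fm (f0 : nat -> C) (m : nat) : nat -> C := iter m invert f0.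

Fixpoint c1 (f0 : nat -> C) (n k : nat) {struct k} : C :=
  match k with
  | 0 => if n == 0%N then 1 else 0
  | k'.+1 => \sum_(1 <= i < (n - k).+2) f0 i * c1 f0 (n - i) k'
  end.
End Invert.

From mathcomp Require Import all_boot all_order all_algebra.
From mathcomp Require Import reals complex.
From mathcomp Require Import zify ring.
Set Implicit Arguments. Unset Strict Implicit. Unset Printing Implicit Defensive.
Import GRing.Theory.
Local Open Scope ring_scope.

(* With F = sum_(i>=1) f_0(i) x^i we have c_1(n,k) = [x^n] F^k for
   1 <= k <= n, so the right-hand side is [x^n] A_m, where
   A_a = F/(1 - aF) = sum_(k>=1) a^(k-1) F^k.  The invert transform of G is
   G/(1 - G), and A_a/(1 - A_a) = F/(1 - (a+1)F) = A_(a+1); so by induction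
   on m from A_0 = F, the generating function of f_m is A_m.  To stay within
   polynomials over an arbitrary commutative ring, A_a is truncated to
   F * sum_(k<N) (aF)^k: then A_a + A_a A_(a+1) - A_(a+1) is exactly F^(N+1)
   times a polynomial, which is invisible in degrees <= N. *)

Section Invert.
Variable C : comNzRingType.
Implicit Types g h : nat -> C.

Lemma size_invert_seq g n : size (invert_seq g n) = n.
Proof. by elim: n => //= n IHn; rewrite size_rcons IHn. Qed.

Lemma nth_invert_seq g n k :
  (0 < k <= n)%N -> nth 0 (invert_seq g n) k.-1 = invert g k.
Proof.
elim: n => [|n IHn] /andP[k_gt0 le_kn]; first by case: k k_gt0 le_kn.
have [-> // | ne_kn] := eqVneq k n.+1.
rewrite /= nth_rcons size_invert_seq ifT; last by lia.
by rewrite IHn //; apply/andP; split; lia.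
Qed.

Lemma invert_rec g n : (0 < n)%N ->
  invert g n = g n + \sum_(1 <= i < n) g i * invert g (n - i)%N.
Proof.
case: n => // n _.
rewrite {1}/invert /= nth_rcons size_invert_seq ltnn eqxx.
congr (_ + _); apply: eq_big_nat => i /andP[i_gt0 lt_in].
by rewrite nth_invert_seq //; apply/andP; split; lia.
Qed.

Lemma invert_unique g h :
  (forall n, (0 < n)%N -> h n = g n + \sum_(1 <= i < n) g i * h (n - i)%N) ->
  forall n, (0 < n)%N -> h n = invert g n.
Proof.
move=> h_rec; elim/ltn_ind => n IHn n_gt0.
rewrite h_rec // invert_rec //; congr (_ + _).
by apply: eq_big_nat => i /andP[i_gt0 lt_in]; rewrite IHn //; lia.
Qed.

End Invert.

Lemma geometric_invert_identity (R : comNzRingType) (x a : R) (N : nat) :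
  let A b := x * \sum_(k < N) (b * x) ^+ k in
  A a + A a * A (a + 1) - A (a + 1) =
  x ^+ N.+1 * ((a + 1) ^+ N * \sum_(k < N) (a * x) ^+ k
               - a ^+ N * \sum_(k < N) ((a + 1) * x) ^+ k).
Proof.
move=> A; rewrite /A; set s := a * x; set t := (a + 1) * x.
set Ss := \sum_(k < N) s ^+ k; set St := \sum_(k < N) t ^+ k.
(* x = t - s, and (y - 1) * (sum_(k<N) y^k) = y^N - 1 for y = s, t. *)
apply/eqP; rewrite -subr_eq0; apply/eqP.
have -> : x * Ss + x * Ss * (x * St) - x * St
          - x ^+ N.+1 * ((a + 1) ^+ N * Ss - a ^+ N * St) =
          x * (Ss * ((t - 1) * St - (t ^+ N - 1))
               - St * ((s - 1) * Ss - (s ^+ N - 1))).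
  by rewrite /s /t !exprMn exprS; ring.
by rewrite !subrX1 !subrr !mulr0 subrr mulr0.
Qed.

Section GeneratingFunction.
Variables (C : comNzRingType) (f0 : nat -> C) (N : nat).

Definition gf : {poly C} := 'X * \poly_(i < N) f0 i.+1.

Lemma coef_gf0 : gf`_0 = 0.
Proof. by rewrite coefXM. Qed.

Lemma coef_gf j : (0 < j <= N)%N -> gf`_j = f0 j.
Proof. by case: j => // j; rewrite coefXM coef_poly /= => ->. Qed.

Lemma coef_gfX_lt k j : (j < k)%N -> (gf ^+ k)`_j = 0.
Proof. by move=> lt_jk; rewrite exprMn coefXnM lt_jk. Qed.

(* k <= j is needed: the recursion also yields junk such as c1 f0 0 1 = f0 1. *)
Lemma c1_coef_gfX k j : (k <= j <= N)%N -> c1 f0 j k = (gf ^+ k)`_j.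
Proof.
elim: k j => [|k IHk] j /andP[le_kj le_jN].
  by rewrite expr0 coef1; case: j {le_kj le_jN}.
rewrite /= exprS coefM -(big_mkord xpredT (fun i => gf`_i * (gf ^+ k)`_(j - i))).
have -> : (j - k.+1).+2 = (j - k).+1 by lia.
rewrite [RHS]big_ltn // coef_gf0 mul0r add0r.
rewrite [RHS](big_cat_nat _ (n := (j - k).+1)) /=; [|lia|lia].
rewrite [X in _ + X]big_nat_cond [X in _ + X]big1 ?addr0; last first.
  by move=> i /andP[/andP[le_i lt_i] _]; rewrite coef_gfX_lt ?mulr0 //; lia.
apply: eq_big_nat => i /andP[i_gt0 lt_i].
by rewrite coef_gf ?IHk //; apply/andP; split; lia.
Qed.

Definition gf_geom (a : C) : {poly C} := gf * \sum_(k < N) (a%:P * gf) ^+ k.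

Lemma coef0_gf_geom a : (gf_geom a)`_0 = 0.
Proof. by rewrite /gf_geom /gf -mulrA coefXM. Qed.

Lemma coef_gf_geom a j : (j <= N)%N ->
  (gf_geom a)`_j = \sum_(1 <= k < j.+1) a ^+ k.-1 * c1 f0 j k.
Proof.
move=> le_jN; rewrite /gf_geom mulr_sumr coef_sum.
under eq_bigr do rewrite exprMn -rmorphXn mulrCA -exprS coefCM.
rewrite -(big_mkord xpredT (fun k => a ^+ k * (gf ^+ k.+1)`_j)).
rewrite (big_cat_nat _ (n := j)) //= big_add1.
rewrite [X in _ + X]big_nat_cond [X in _ + X]big1 ?addr0; last first.
  by move=> k /andP[/andP[le_jk _] _]; rewrite coef_gfX_lt ?mulr0.
by apply: eq_big_nat => k /andP[k_gt0 lt_kj]; rewrite c1_coef_gfX //; lia.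
Qed.

Lemma coef_gf_geom_invert a j : (j <= N)%N ->
  (gf_geom (a + 1))`_j = (gf_geom a)`_j + (gf_geom a * gf_geom (a + 1))`_j.
Proof.
move=> le_jN; apply/eqP; rewrite eq_sym -subr_eq0 -coefD -coefB.
rewrite /gf_geom rmorphD rmorph1 geometric_invert_identity.
by rewrite /gf exprMn -mulrA coefXnM ltnS le_jN.
Qed.

End GeneratingFunction.

Section WeightedSums.
Variables (C : comNzRingType) (f0 : nat -> C).

Definition c1_weighted (a : C) (n : nat) : C :=
  \sum_(1 <= k < n.+1) a ^+ k.-1 * c1 f0 n k.

Lemma c1_weighted0 n : (0 < n)%N -> c1_weighted 0 n = f0 n.
Proof.
move=> n_gt0; have n_range : (1 <= n <= n)%N by rewrite n_gt0 leqnn.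
rewrite /c1_weighted big_ltn // big_nat_cond big1 ?addr0.
  by rewrite expr0 mul1r (c1_coef_gfX f0 n_range) expr1 (coef_gf f0 n_range).
by move=> [|[|k]] /andP[/andP[]] //; rewrite expr0n mul0r.
Qed.

Lemma c1_weightedS a n : (0 < n)%N ->
  c1_weighted (a + 1) n =
  c1_weighted a n + \sum_(1 <= i < n) c1_weighted a i * c1_weighted (a + 1) (n - i)%N.
Proof.
move=> n_gt0.
have gfE b j : (j <= n)%N -> c1_weighted b j = (gf_geom f0 n b)`_j.
  by move=> le_jn; rewrite coef_gf_geom.
rewrite !gfE // coef_gf_geom_invert // coefM; congr (_ + _).
rewrite -(big_mkord xpredT (fun i => (gf_geom f0 n a)`_i * (gf_geom f0 n (a + 1))`_(n - i))).
rewrite big_ltn // big_nat_recr //= subnn subn0 !coef0_gf_geom mul0r mulr0 add0r addr0.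
by apply: eq_big_nat => i /andP[_ lt_in]; rewrite !gfE //; lia.
Qed.

Lemma fm_c1_weighted m n : (0 < n)%N -> fm f0 m n = c1_weighted m%:R n.
Proof.
elim: m n => [|m IHm] n n_gt0; first by rewrite c1_weighted0.
rewrite /fm iterS -/(fm f0 m) -natr1; symmetry.
apply: invert_unique => // k k_gt0; rewrite c1_weightedS // IHm //; congr (_ + _).
by apply: eq_big_nat => i /andP[i_gt0 _]; rewrite IHm.
Qed.

End WeightedSums.

Theorem proposition10 (R : realType) (f0 : nat -> R[i]) (m : nat) (n : nat) :
  (1 <= m)%N -> (1 <= n)%N ->
  fm f0 m n = \sum_(1 <= i < n.+1) (m%:R ^+ i.-1) * c1 f0 n i.
Proof. by move=> _ n_gt0; exact: fm_c1_weighted. Qed.
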